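(* Let $\varphi$ be a CNF formula with $m$ clauses. During the execution of Algorithm msu1 on $\varphi$, the total number of blocking variables created is $\mathcal{O}(m^2)$ in the worst case.
   Context: Algorithm msu1 (Fu and Malik). Input: a CNF formula $\varphi$ (a finite set of clauses). All clauses of $\varphi$ are tagged non-auxiliary. The working formula is initialised to $\varphi_W:=\varphi$. Each iteration calls a SAT oracle on $\varphi_W$. If $\varphi_W$ is unsatisfiable, the oracle returns an unsatisfiable core $\varphi_C\subseteq\varphi_W$, i.e. a subset of the clauses of $\varphi_W$ that is itself unsatisfiable. Then, for each non-auxiliary clause $\omega\in\varphi_C$, a fresh variable $b$ (a blocking variable) is created and $\omega$ is replaced in $\varphi_W$ by $\omega\vee b$. The new clause is tagged non-auxiliary, and $b$ is associated with the original clause of $\varphi$ from which $\omega$ descends. Let $BV$ be the set of blocking variables created in this iteration. A CNF encoding of $\sum_{b\in BV} b=1$ is added to $\varphi_W$; its clauses are tagged auxiliary. An assignment to $BV$ extends to a satisfying assignment of the encoding iff exactly one variable of $BV$ is true. If $\varphi_W$ is satisfiable, the algorithm stops and returns $|\varphi|-\nu$, where $\nu$ is the number of blocking variables assigned value 1. *)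

(* Model of Algorithm msu1 (Fu & Malik) as a nondeterministic
   transition system: the SAT oracle's choice of core and the choice of the
   CNF encoding of the exactly-one constraint are arbitrary (subject to the
   specification in the paper). *)
From mathcomp Require Import all_boot.
Set Implicit Arguments. Unset Strict Implicit. Unset Printing Implicit Defensive.

(* Variables are natural numbers; a literal (v, b) is v if b = true, ~v otherwise. *)
Definition lit := (nat * bool)%type.
Definition clause := seq lit.
Definition cnf := seq clause.
Definition assignment := nat -> bool.

Definition lit_sat (s : assignment) (l : lit) : bool := s l.1 == l.2.
Definition clause_sat (s : assignment) (c : clause) : bool := has (lit_sat s) c.
Definition cnf_sat (s : assignment) (f : cnf) : bool := all (clause_sat s) f.
Definition satisfiable (f : cnf) : Prop := exists s, cnf_sat s f.

Record tclause := TClause { tc_clause : clause; tc_aux : bool }.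
Definition tc_dflt : tclause := TClause [::] true.

Definition occurs (v : nat) (W : seq tclause) : bool :=
  has (fun tc => v \in map fst (tc_clause tc)) W.

Definition msu1_init (phi : cnf) : seq tclause :=
  map (fun c => TClause c false) phi.

Definition relaxed (W : seq tclause) (I : pred nat) : seq nat :=
  [seq i <- iota 0 (size W) | I i && ~~ tc_aux (nth tc_dflt W i)].

Definition msu1_update (W : seq tclause) (I : pred nat) (bv : nat -> nat)
    (E : cnf) : seq tclause :=
  [seq (if I i && ~~ tc_aux (nth tc_dflt W i)
        then TClause (tc_clause (nth tc_dflt W i) ++ [:: (bv i, true)]) false
        else nth tc_dflt W i) | i <- iota 0 (size W)]
  ++ map (fun c => TClause c true) E.

(* One (unsatisfiable) iteration of msu1.  The state is (working formula,
   number of blocking variables created so far). *)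
Definition msu1_step (W : seq tclause) (n : nat) (W' : seq tclause) (n' : nat)
    : Prop :=
  exists (I : pred nat) (bv : nat -> nat) (E : cnf),
    let R := relaxed W I in
    let BV := map bv R in
    ~ satisfiable [seq tc_clause (nth tc_dflt W i) | i <- iota 0 (size W) & I i]
    /\ uniq BV
    /\ (forall b, b \in BV -> ~~ occurs b W)
    /\ (forall c, c \in E -> forall l, l \in c -> l.1 \in BV \/ ~~ occurs l.1 W)
    (* E encodes sum_{b in BV} b = 1 *)
    /\ (forall s : assignment,
          (exists s' : assignment,
              (forall b, b \in BV -> s' b = s b) /\ cnf_sat s' E)
          <-> count s BV = 1)
    /\ W' = msu1_update W I bv E
    /\ n' = n + size R.

Inductive msu1_reachable (phi : cnf) : seq tclause -> nat -> Prop :=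
| msu1_start : msu1_reachable phi (msu1_init phi) 0
| msu1_next W n W' n' :
    msu1_reachable phi W n -> msu1_step W n W' n' -> msu1_reachable phi W' n'.

From mathcomp Require Import all_boot.

(* The working formula always has exactly m non-auxiliary ("soft") clauses,
   so one iteration creates at most m blocking variables.  Moreover there is
   always an assignment s satisfying every auxiliary clause; let viol(s) be
   the number of soft clauses falsified by s.  An unsatisfiable core must
   contain a soft clause falsified by s; setting its (fresh) blocking
   variable to 1 and extending by a model of the exactly-one encoding gives
   an assignment s2 that still satisfies all auxiliary clauses and violates
   strictly fewer soft clauses.  Hence the quantity n + m * viol(s), with n
   the number of blocking variables created so far, never increases along
   an execution; it starts at most at m * m, which bounds n. *)

Definition soft (tc : tclause) : bool := ~~ tc_aux tc.

Definition aux_sat (s : assignment) (W : seq tclause) : bool :=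
  all (fun tc => tc_aux tc ==> clause_sat s (tc_clause tc)) W.

Definition violated (s : assignment) (tc : tclause) : bool :=
  soft tc && ~~ clause_sat s (tc_clause tc).

Definition msu1_invariant (m : nat) (W : seq tclause) (n : nat) : Prop :=
  count soft W = m /\
  exists s, aux_sat s W /\ n + m * count (violated s) W <= m * m.

Lemma count_lt_in [T : eqType] [p1 p2 : pred T] [s : seq T] [x : T] :
  {in s, subpred p1 p2} -> x \in s -> p2 x -> ~~ p1 x ->
  count p1 s < count p2 s.
Proof.
have count_le t : {in t, subpred p1 p2} -> count p1 t <= count p2 t.
  move=> sub12; rewrite -(eq_in_count (a1 := predI p1 p2)); last first.
    by move=> y yt /=; case p1y: (p1 y); rewrite ?(sub12 y yt p1y).
  by apply: sub_count => y /andP[].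
elim: s => //= a s IH sub12; rewrite inE => /orP[/eqP<- | xs] p2x np1x.
  rewrite p2x (negbTE np1x) add1n ltnS; apply: count_le.
  by move=> y ys; apply: sub12; rewrite inE ys orbT.
have p12a : p1 a <= p2 a by case p1a: (p1 a); rewrite ?(sub12 a (mem_head _ _) p1a).
rewrite -addnS leq_add // IH // => y ys; apply: sub12; by rewrite inE ys orbT.
Qed.

Lemma count_positions (p : pred tclause) (W : seq tclause) :
  count p W = count (fun i => p (nth tc_dflt W i)) (iota 0 (size W)).
Proof. by rewrite -{1}(mkseq_nth tc_dflt W) /mkseq count_map. Qed.

Lemma mem_iota_size [W : seq tclause] [i : nat] :
  i \in iota 0 (size W) -> i < size W.
Proof. by rewrite mem_iota. Qed.

Definition relax_at (W : seq tclause) (I : pred nat) (bv : nat -> nat)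
    (i : nat) : tclause :=
  if I i && soft (nth tc_dflt W i)
  then TClause (tc_clause (nth tc_dflt W i) ++ [:: (bv i, true)]) false
  else nth tc_dflt W i.

Lemma count_encoding (p : pred tclause) (E : cnf) :
  (forall c, ~~ p (TClause c true)) -> count p (map (fun c => TClause c true) E) = 0.
Proof. by move=> not_aux; elim: E => //= c E ->; rewrite (negbTE (not_aux c)). Qed.

Lemma msu1_updateE W I bv E :
  msu1_update W I bv E =
  map (relax_at W I bv) (iota 0 (size W)) ++ map (fun c => TClause c true) E.
Proof. by []. Qed.

(* Relaxation keeps soft clauses soft and auxiliary ones auxiliary, and the
   encoding clauses are auxiliary: the number of soft clauses is invariant. *)
Lemma count_soft_update W I bv E :
  count soft (msu1_update W I bv E) = count soft W.
Proof.
rewrite msu1_updateE count_cat count_encoding // addn0 count_map count_positions.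
by apply: eq_count => i; rewrite /= /relax_at; case: ifP => [/andP[_ ->]|].
Qed.

Lemma size_relaxed W I : size (relaxed W I) <= count soft W.
Proof.
rewrite size_filter count_positions.
by apply: sub_count => i /andP[].
Qed.

Lemma occurs_nth [W : seq tclause] [i : nat] [l : lit] :
  i < size W -> l \in tc_clause (nth tc_dflt W i) -> occurs l.1 W.
Proof. by move=> iW lc; apply/(has_nthP tc_dflt); exists i => //; apply: map_f. Qed.

Lemma clause_sat_agree (s1 s2 : assignment) (c : clause) :
  {in c, forall l, s1 l.1 = s2 l.1} -> clause_sat s1 c = clause_sat s2 c.
Proof. by move=> agree; apply: eq_in_has => l lc; rewrite /lit_sat agree. Qed.

Definition merge (W : seq tclause) (s s' : assignment) : assignment :=
  fun x => if occurs x W then s x else s' x.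

Lemma merge_sat_old W s s' i :
  i < size W ->
  clause_sat (merge W s s') (tc_clause (nth tc_dflt W i)) =
  clause_sat s (tc_clause (nth tc_dflt W i)).
Proof.
by move=> iW; apply: clause_sat_agree => l lc; rewrite /merge (occurs_nth iW lc).
Qed.

Lemma merge_sat_fresh W s s' (c : clause) :
  {in c, forall l, ~~ occurs l.1 W} ->
  clause_sat (merge W s s') c = clause_sat s' c.
Proof. by move=> fresh; apply: clause_sat_agree => l /fresh /negbTE; rewrite /merge => ->. Qed.

Section Repair.

Variables (W : seq tclause) (I : pred nat) (bv : nat -> nat) (E : cnf).
Variable s : assignment.

Let BV := map bv (relaxed W I).

Hypothesis core_unsat :
  ~ satisfiable [seq tc_clause (nth tc_dflt W i) | i <- iota 0 (size W) & I i].
Hypothesis BV_uniq : uniq BV.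
Hypothesis BV_fresh : forall b, b \in BV -> ~~ occurs b W.
Hypothesis E_vars :
  forall c, c \in E -> forall l, l \in c -> l.1 \in BV \/ ~~ occurs l.1 W.
Hypothesis E_encodes : forall t : assignment,
  (exists t' : assignment, (forall b, b \in BV -> t' b = t b) /\ cnf_sat t' E)
  <-> count t BV = 1.
Hypothesis s_aux : aux_sat s W.

(* [s] falsifies some clause of the core; since [s] satisfies the auxiliary
   clauses, that clause is soft, so it gets relaxed. *)
Lemma core_violated :
  exists2 i, i \in relaxed W I & ~~ clause_sat s (tc_clause (nth tc_dflt W i)).
Proof.
have : ~~ cnf_sat s [seq tc_clause (nth tc_dflt W i) | i <- iota 0 (size W) & I i].
  by apply/negP => sat; apply: core_unsat; exists s.
rewrite /cnf_sat all_map => /allPn[i]; rewrite mem_filter => /andP[Ii iW] falsi.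
exists i => //; rewrite mem_filter Ii iW andbT /=.
apply: contra falsi => auxi.
by move/(all_nthP tc_dflt): s_aux => /(_ i (mem_iota_size iW)); rewrite auxi.
Qed.

(* Setting the blocking variable of the falsified core clause to 1, and the
   fresh variables according to a model of the encoding, repairs that clause
   without breaking any auxiliary clause. *)
Lemma repair :
  exists s2, aux_sat s2 (msu1_update W I bv E) /\
    count (violated s2) (msu1_update W I bv E) < count (violated s) W.
Proof.
have [i0 i0R i0_false] := core_violated.
move: (i0R); rewrite mem_filter -/(soft _) => /andP[/andP[Ii0 soft_i0] i0W].
have bv_i0 : bv i0 \in BV by apply: map_f.
have [s' [s'_BV s'_E]] : exists s' : assignment,
    (forall b, b \in BV -> s' b = (b == bv i0)) /\ cnf_sat s' E.
  by apply/(E_encodes (fun b => b == bv i0)); rewrite (count_uniq_mem _ BV_uniq) bv_i0.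
set s2 := merge W s s'.
have s2_bv : s2 (bv i0) by rewrite /s2 /merge (negbTE (BV_fresh _ bv_i0)) s'_BV ?eqxx.
have E_fresh c : c \in E -> {in c, forall l, ~~ occurs l.1 W}.
  by move=> cE l lc; case: (E_vars _ cE _ lc) => [/BV_fresh|].
have aux_new : {in E, forall c, clause_sat s2 c}.
  by move=> c cE; rewrite merge_sat_fresh; [apply: (allP s'_E) | apply: E_fresh].
have relax_violated i : i \in iota 0 (size W) ->
    violated s2 (relax_at W I bv i) -> violated s (nth tc_dflt W i).
  move=> /mem_iota_size iW; rewrite /violated /relax_at.
  case: ifP => [/andP[_ ->] | _] /=; last by rewrite merge_sat_old.
  by rewrite /clause_sat has_cat negb_or -/(clause_sat _ _) merge_sat_old // => /andP[].
exists s2; split.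
  rewrite msu1_updateE /aux_sat all_cat !all_map; apply/andP; split.
    apply/allP => i /mem_iota_size iW /=; rewrite /relax_at; case: ifP => //= _.
    by rewrite merge_sat_old //; apply: (all_nthP tc_dflt s_aux).
  by apply/allP => c cE /=; apply: aux_new.
rewrite msu1_updateE count_cat count_encoding // addn0 count_map count_positions.
apply: (count_lt_in relax_violated i0W).
  by rewrite /violated soft_i0 i0_false.
rewrite /violated /relax_at Ii0 soft_i0 /= /clause_sat has_cat /=.
by rewrite /lit_sat s2_bv !orbT.
Qed.

End Repair.

Arguments repair [W I bv E s].

Lemma msu1_step_invariant m W n W' n' :
  msu1_step W n W' n' -> msu1_invariant m W n -> msu1_invariant m W' n'.
Proof.
move=> [I [bv [E [core [uniqBV [freshBV [varsE [encE [-> ->]]]]]]]]].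
move=> [soft_m [s [s_aux pot]]].
have [s2 [s2_aux fewer]] := repair core uniqBV freshBV varsE encE s_aux.
split; first by rewrite count_soft_update.
exists s2; split => //; apply: leq_trans pot.
rewrite -addnA leq_add2l; apply: (@leq_trans (m + m * count (violated s2)
  (msu1_update W I bv E))); first by rewrite leq_add2r -soft_m size_relaxed.
by rewrite -mulnS leq_mul2l fewer orbT.
Qed.

Lemma msu1_reachable_invariant phi W n :
  msu1_reachable phi W n -> msu1_invariant (size phi) W n.
Proof.
elim=> [|W0 n0 W' n' _ IH step]; last exact: msu1_step_invariant step IH.
split; first by rewrite count_map count_predT.
exists (fun=> true); split; first by rewrite /aux_sat all_map; apply/allP.
rewrite add0n leq_mul2l -(size_map (fun c => TClause c false)) count_size.
by rewrite orbT.
Qed.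

Theorem proposition5 :
  exists C : nat, forall (phi : cnf) (W : seq tclause) (n : nat),
    msu1_reachable phi W n -> n <= C * (size phi) ^ 2.
Proof.
exists 1 => phi W n /msu1_reachable_invariant[_ [s [_ pot]]].
by rewrite mul1n -mulnn; apply: leq_trans pot; apply: leq_addr.
Qed.
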